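(* Let $\mathcal{S}$ be an addable abstract numeration system, let $\mathbf{x}$ be an $\mathcal{S}$-automatic infinite word over a finite alphabet, and let $X$ be the subshift generated by $\mathbf{x}$. Then the winning shift $W(X)$ is weakly $\mathcal{S}$-codable.
   Context: Subshifts are one-sided: closed shift-invariant subsets of $A^{\mathbb{N}}$; the subshift generated by $\mathbf{x}$ is its orbit closure. Winning shift: for $X\subseteq A^{\mathbb{N}}$ and a choice sequence $\alpha=\alpha_0\alpha_1\cdots\in\{0,\dots,|A|-1\}^{\mathbb{N}}$, Alice and Bob play infinitely many rounds; in round $j$ Alice chooses $A_j\subseteq A$ with $|A_j|=\alpha_j+1$ and Bob chooses $a_j\in A_j$; Alice wins if $a_0a_1\cdots\in X$. $W(X)$ is the set of $\alpha$ for which Alice has a winning strategy (a subset of $\mathbb{N}^{\mathbb{N}}$). ANS: $\mathcal{S}=(L,\prec)$ with $L$ an infinite language and $\prec$ a total order on $L$ of order type $\omega$; $\mathrm{rep}(n)$ is the $n$-th word of $L$, $\mathrm{val}=\mathrm{rep}^{-1}$; tuples in $\mathbb{N}^d$ are represented by left-padding the component representations with a new symbol $\#$ to equal length. $Y\subseteq\mathbb{N}^d$ is $\mathcal{S}$-recognizable if $\mathrm{rep}(Y)$ is regular. $\mathcal{S}$ is addable if $\{(x,y,x+y)\}$ is $\mathcal{S}$-recognizable. $\mathbf{x}$ is $\mathcal{S}$-automatic if some DFA with output outputs $\mathbf{x}[n]$ on input $\mathrm{rep}(n)$ for all $n\ge0$. Codability: for $\mathbf{y}\in\mathbb{N}^{\mathbb{N}}$,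 $\sum\mathbf{y}=\sum_iy_i$; if $\sum\mathbf{y}=d<\infty$, $\nu(\mathbf{y})$ is the unique nondecreasing $(n_1,\dots,n_d)$ with $y_j=|\{k:n_k=j\}|$ for all $j$. $Y\subseteq\mathbb{N}^{\mathbb{N}}$ is weakly $\mathcal{S}$-codable if for each $k\in\mathbb{N}$ the set $\{\nu(\mathbf{y}):\mathbf{y}\in Y,\sum\mathbf{y}\le k\}$ is $\mathcal{S}$-recognizable (i.e. its intersection with each $\mathbb{N}^i$, $i\le k$, is). *)

From mathcomp Require Import all_boot.
Set Implicit Arguments. Unset Strict Implicit. Unset Printing Implicit Defensive.

Record DFA (B : finType) := {
  dfa_state : finType;
  dfa_start : dfa_state;
  dfa_delta : dfa_state -> B -> dfa_state;
  dfa_final : pred dfa_state }.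

Definition dfa_accepts (B : finType) (D : DFA B) (w : seq B) : bool :=
  @dfa_final B D (foldl (@dfa_delta B D) (@dfa_start B D) w).

Definition regular (B : finType) (L : seq B -> Prop) : Prop :=
  exists D : DFA B, forall w, L w <-> dfa_accepts D w.

(* An ANS (L, ≺) over the finite alphabet Sigma, with ≺ of order type ω, is
   given by its enumeration rep : nat -> seq Sigma (rep n = n-th word of L),
   which is injective; L is the range of rep, and u ≺ v iff
   val u < val v. *)
Record ANS (Sigma : finType) := {
  rep : nat -> seq Sigma;
  rep_inj : injective rep }.

Definition ANS_lang (Sigma : finType) (S : ANS Sigma) (w : seq Sigma) : Prop :=
  exists n, rep S n = w.

Definition ANS_lt (Sigma : finType) (S : ANS Sigma) (u v : seq Sigma) : Prop :=
  exists m n, rep S m = u /\ rep S n = v /\ m < n.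

(* Padding symbol # is [None]; letters of L are [Some a]. A d-tuple is
   represented by a word over the alphabet (Sigma ∪ {#})^d. *)
Definition pad_letter (Sigma : finType) (d : nat) := {ffun 'I_d -> option Sigma}.

Definition rep_tuple (Sigma : finType) (S : ANS Sigma) (d : nat)
    (t : d.-tuple nat) : seq (pad_letter Sigma d) :=
  let m := \max_(i < d) size (rep S (tnth t i)) in
  let padded (i : 'I_d) : seq (option Sigma) :=
      nseq (m - size (rep S (tnth t i))) None ++ map Some (rep S (tnth t i)) in
  mkseq (fun p => [ffun i => nth None (padded i) p]) m.

Definition recognizable (Sigma : finType) (S : ANS Sigma) (d : nat)
    (Y : d.-tuple nat -> Prop) : Prop :=
  regular (fun w : seq (pad_letter Sigma d) =>
             exists t, Y t /\ rep_tuple S t = w).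

Definition addable (Sigma : finType) (S : ANS Sigma) : Prop :=
  recognizable S (fun t : 3.-tuple nat =>
     tnth t (@Ordinal 3 2 isT) = tnth t (@Ordinal 3 0 isT) + tnth t (@Ordinal 3 1 isT)).

Definition automatic (Sigma A : finType) (S : ANS Sigma) (x : nat -> A) : Prop :=
  exists (Q : finType) (q0 : Q) (delta : Q -> Sigma -> Q) (out : Q -> A),
    forall n, x n = out (foldl delta q0 (rep S n)).

(* Orbit closure of x in A^N (product topology): y lies in it iff every
   prefix of y occurs in x, i.e. every cylinder around y meets the orbit. *)
Definition orbit_closure (A : finType) (x : nat -> A) (y : nat -> A) : Prop :=
  forall k, exists n, forall i, i < k -> y i = x (n + i).

(* A strategy for Alice: given Bob's previous choices, a set A_j ⊆ A. *)
Definition strategy (A : finType) := seq A -> {set A}.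

Definition prefix_of (A : Type) (a : nat -> A) (j : nat) : seq A := mkseq a j.

Definition winning_strategy (A : finType) (X : (nat -> A) -> Prop)
    (alpha : nat -> nat) (s : strategy A) : Prop :=
  (forall h : seq A, #|s h| = (alpha (size h)).+1) /\
  (forall a : nat -> A, (forall j, a j \in s (prefix_of a j)) -> X a).

Definition winning_shift (A : finType) (X : (nat -> A) -> Prop)
    (alpha : nat -> nat) : Prop :=
  exists s : strategy A, winning_strategy X alpha s.

Definition sum_eq (y : nat -> nat) (i : nat) : Prop :=
  exists N, (forall j, N <= j -> y j = 0) /\ \sum_(j < N) y j = i.

Definition nu_is (y : nat -> nat) (d : nat) (t : d.-tuple nat) : Prop :=
  sorted leq t /\ forall j, y j = count (pred1 j) t.

Definition weakly_codable (Sigma : finType) (S : ANS Sigma)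
    (Y : (nat -> nat) -> Prop) : Prop :=
  forall k i, i <= k ->
    recognizable S (fun t : i.-tuple nat =>
      exists y, Y y /\ (exists s, sum_eq y s /\ s <= k) /\ nu_is y t).

From Pilot Require Import Defs.
From mathcomp Require Import all_boot boolp zify.
Set Implicit Arguments. Unset Strict Implicit. Unset Printing Implicit Defensive.

(* Büchi–Bruyère style argument.  A choice sequence alpha with
   sum alpha = i is coded by the nondecreasing tuple t = nu(alpha); alpha_j is
   the number of k with t_k = j.  Positions of the game that Alice can still
   win are factors of x, so they can be named by an occurrence q in x together
   with a length; rounds with alpha_j = 0 are played by Alice alone.  Hence
   "alpha in W(X)" is expressed by a first-order formula in t over the
   structure (N, +, n |-> x n), with one round of the formula per block of
   equal entries of t.  Every relation definable over this structure is
   S-recognizable when S is addable and x is S-automatic. *)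

Fixpoint unpad (T : eqType) (c : T) (w : seq T) : seq T :=
  if w is a :: w' then (if a == c then unpad c w' else w) else [::].

Definition unpadded (T : eqType) (c : T) (w : seq T) : bool :=
  if w is a :: _ then a != c else true.

Lemma unpadded_unpad (T : eqType) (c : T) w : unpadded c (unpad c w).
Proof. by elim: w => [|a w IH] //=; case: ifP => Hac //=; rewrite Hac. Qed.

Lemma unpad_id (T : eqType) (c : T) w : unpadded c w -> unpad c w = w.
Proof. by case: w => [|a w] //= /negbTE ->. Qed.

Lemma unpad_nseq (T : eqType) (c : T) k w : unpad c (nseq k c ++ w) = unpad c w.
Proof. by elim: k => [|k IH] //=; rewrite eqxx. Qed.

Lemma unpad_decomp (T : eqType) (c : T) w : exists k, w = nseq k c ++ unpad c w.
Proof.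
elim: w => [|a w [k IH]] /=; first by exists 0.
case: eqP => [->|_]; first by exists k.+1; rewrite /= -IH.
by exists 0.
Qed.

Lemma foldl_map (T1 T2 R : Type) (h : T1 -> T2) (f : R -> T2 -> R) z s :
  foldl f z (map h s) = foldl (fun r a => f r (h a)) z s.
Proof. by elim: s z => //= a s IH z. Qed.

Section RegularClosure.
Variable B : finType.

Lemma regular_ext (L L' : seq B -> Prop) :
  (forall w, L w <-> L' w) -> regular L -> regular L'.
Proof. by move=> HL [D HD]; exists D => w; rewrite -HL; exact: HD. Qed.

Definition mkDFA (Q : finType) (q0 : Q) (d : Q -> B -> Q) (f : pred Q) : DFA B :=
  {| dfa_state := Q; dfa_start := q0; dfa_delta := d; dfa_final := f |}.

Lemma regular_const (P : Prop) : regular (fun _ : seq B => P).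
Proof.
case: (pselect P) => HP.
  by exists (@mkDFA unit tt (fun _ _ => tt) (fun _ => true)).
by exists (@mkDFA unit tt (fun _ _ => tt) (fun _ => false)).
Qed.

Lemma regular_compl (L : seq B -> Prop) : regular L -> regular (fun w => ~ L w).
Proof.
move=> [D HD].
exists (mkDFA (dfa_start D) (@dfa_delta _ D) (predC (@dfa_final _ D))) => w.
by rewrite HD /dfa_accepts /=; split => /negP.
Qed.

Definition prodDFA (D1 D2 : DFA B) (f : bool -> bool -> bool) : DFA B :=
  mkDFA (dfa_start D1, dfa_start D2)
    (fun p a => (@dfa_delta _ D1 p.1 a, @dfa_delta _ D2 p.2 a))
    (fun p => f (@dfa_final _ D1 p.1) (@dfa_final _ D2 p.2)).

Lemma prodDFA_accepts D1 D2 f w :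
  dfa_accepts (prodDFA D1 D2 f) w = f (dfa_accepts D1 w) (dfa_accepts D2 w).
Proof.
rewrite /dfa_accepts /=; move: (dfa_start D1) (dfa_start D2).
by elim: w => [|a w IH] q1 q2 //=; rewrite IH.
Qed.

Lemma regular_and (L1 L2 : seq B -> Prop) :
  regular L1 -> regular L2 -> regular (fun w => L1 w /\ L2 w).
Proof.
move=> [D1 H1] [D2 H2]; exists (prodDFA D1 D2 andb) => w.
by rewrite prodDFA_accepts H1 H2; split => [[-> ->]|/andP].
Qed.

Lemma regular_or (L1 L2 : seq B -> Prop) :
  regular L1 -> regular L2 -> regular (fun w => L1 w \/ L2 w).
Proof.
move=> [D1 H1] [D2 H2]; exists (prodDFA D1 D2 orb) => w.
by rewrite prodDFA_accepts H1 H2; split => [[]->|/orP]; rewrite ?orbT; auto.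
Qed.

Lemma regular_all (I : finType) (L : I -> seq B -> Prop) :
  (forall i, regular (L i)) -> regular (fun w => forall i, L i w).
Proof.
move=> HL; suff: regular (fun w => forall i, i \in enum I -> L i w).
  by apply: regular_ext => w; split => Hw i //; apply: Hw; rewrite mem_enum.
elim: (enum I) => [|i s IH].
  by apply: regular_ext (regular_const True) => w; split.
apply: regular_ext (regular_and (HL i) IH) => w; split.
  by case=> Hi Hs j; rewrite inE => /orP[/eqP ->|]; auto.
by move=> Hj; split => [|j Hjs]; apply: Hj; rewrite inE ?eqxx ?Hjs ?orbT.
Qed.

Lemma regular_preim (C : finType) (h : B -> C) (L : seq C -> Prop) :
  regular L -> regular (fun w => L (map h w)).
Proof.
move=> [D HD]; exists (mkDFA (dfa_start D) (fun q b => @dfa_delta _ D q (h b)) (@dfa_final _ D)).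
by move=> w; rewrite HD /dfa_accepts /= foldl_map.
Qed.

(* Inverse image under unpadding: the automaton ignores leading c's. *)
Lemma regular_unpad_preim (c : B) (L : seq B -> Prop) :
  regular L -> regular (fun w => L (unpad c w)).
Proof.
move=> [D HD].
pose d (p : bool * dfa_state D) a :=
  if ~~ p.1 && (a == c) then p else (true, @dfa_delta _ D p.2 a).
have Hstarted q w : foldl d (true, q) w = (true, foldl (@dfa_delta _ D) q w).
  by elim: w q => [|a w IH] q //=; exact: IH.
have Hrun q w : (foldl d (false, q) w).2 = foldl (@dfa_delta _ D) q (unpad c w).
  elim: w => [|a w IH] //=; rewrite /d /=; case: eqP => //= _; by rewrite Hstarted.
exists (mkDFA (false, dfa_start D) d (fun p => @dfa_final _ D p.2)).
by move=> w; rewrite HD /dfa_accepts /= Hrun.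
Qed.

Lemma regular_unpadded (c : B) : regular (fun w => unpadded c w).
Proof.
pose d (p : option bool) (a : B) := if p is Some b then Some b else Some (a != c).
exists (mkDFA None d (fun p => if p is Some b then b else true)) => w.
have Hfixed b w' : foldl d (Some b) w' = Some b by elim: w'.
by rewrite /dfa_accepts; case: w => [|a w] //=; rewrite Hfixed.
Qed.

End RegularClosure.

(* The subset construction: the set of states of a nondeterministic automaton
   reachable by reading u. *)
Definition reach (C Q : finType) (step : Q -> C -> {set Q}) (S0 : {set Q}) (u : seq C) :=
  foldl (fun (R : {set Q}) a => \bigcup_(q in R) step q a) S0 u.

Lemma regular_nfa (C Q : finType) (step : Q -> C -> {set Q}) (S0 : {set Q}) (fin : pred Q) :
  regular (fun u : seq C => exists2 q, q \in reach step S0 u & fin q).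
Proof.
exists (mkDFA S0 (fun (R : {set Q}) a => \bigcup_(q in R) step q a)
               (fun R : {set Q} => [exists q in R, fin q])) => u.
rewrite /dfa_accepts /= /reach; split; first by case=> q Hq Hf; apply/existsP; exists q; rewrite Hq.
by case/existsP => q /andP[]; exists q.
Qed.

(* Image under a letter-to-letter map h of the words accepted by D from some
   state in S0: the nondeterministic automaton guesses the preimage letters. *)
Lemma regular_image_from (B C : finType) (h : B -> C) (D : DFA B) (S0 : {set dfa_state D}) :
  regular (fun u => exists q, q \in S0 /\ exists w, map h w = u /\
                  @dfa_final _ D (foldl (@dfa_delta _ D) q w)).
Proof.
pose step (q : dfa_state D) (c : C) :=
  [set q' | [exists b, (h b == c) && (@dfa_delta _ D q b == q')]].
have Hreach u R q' : q' \in reach step R u <->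
    exists q, q \in R /\ exists w, map h w = u /\ foldl (@dfa_delta _ D) q w = q'.
  elim: u R q' => [|c u IH] R q' /=.
    split; first by move=> Hq'; exists q'; split => //; exists [::].
    by case=> q [Hq [[|b w] [//= _ <-]]].
  rewrite /reach /= -/(reach step _ u) IH; split.
    case=> q1 [/bigcupP[q Hq]]; rewrite inE => /existsP[b /andP[/eqP Hb /eqP Hq1]] [w [Hw Hf]].
    by exists q; split => //; exists (b :: w); rewrite /= Hb Hw Hq1.
  case=> q [Hq [[|b w] [//= [Hb Hw] Hf]]].
  exists (@dfa_delta _ D q b); split; last by exists w.
  by apply/bigcupP; exists q => //; rewrite inE; apply/existsP; exists b; rewrite Hb !eqxx.
apply: regular_ext (regular_nfa step S0 (@dfa_final _ D)) => u; split.
  by case=> q' /Hreach [q [Hq [w [Hw Hf]]]] Hfin; exists q; split => //; exists w; rewrite Hf.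
case=> q [Hq [w [Hw Hf]]]; exists (foldl (@dfa_delta _ D) q w) => //.
by apply/Hreach; exists q; split => //; exists w.
Qed.

Lemma regular_image (B C : finType) (h : B -> C) (L : seq B -> Prop) :
  regular L -> regular (fun u => exists w, L w /\ map h w = u).
Proof.
move=> [D HD]; apply: regular_ext (regular_image_from h [set dfa_start D]) => u; split.
  by case=> q [/set1P -> [w [Hw Hf]]]; exists w; split => //; exact/HD.
case=> w [/HD Hw Hu]; exists (dfa_start D); split; first exact: set11.
by exists w.
Qed.

(* Image under unpadding: start from any state reached by a block of c's. *)
Lemma regular_unpad_image (B : finType) (c : B) (L : seq B -> Prop) :
  regular L -> regular (fun u => exists w, L w /\ unpad c w = u).
Proof.
move=> [D HD].
pose R := [set q | `[< exists k, foldl (@dfa_delta _ D) (dfa_start D) (nseq k c) = q >]].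
apply: regular_ext (regular_and (regular_unpadded c) (regular_image_from id R)) => u; split.
  case=> Hu [q [/[!inE] /asboolP [k Hk] [w [Hw Hf]]]].
  exists (nseq k c ++ u); split; last by rewrite unpad_nseq unpad_id.
  by apply/HD; rewrite /dfa_accepts foldl_cat Hk -Hw map_id.
case=> w [Hw <-]; split; first exact: unpadded_unpad.
have [k Hk] := unpad_decomp c w.
exists (foldl (@dfa_delta _ D) (dfa_start D) (nseq k c)); split.
  by rewrite inE; apply/asboolP; exists k.
exists (unpad c w); split; first by rewrite map_id.
by rewrite -foldl_cat -Hk; apply/HD.
Qed.

Section Encoding.
Variables (Sigma : finType) (S : ANS Sigma).

Definition enc_len d (v : 'I_d -> nat) := \max_(i < d) size (rep S (v i)).

Definition lpad (m : nat) (r : seq Sigma) : seq (option Sigma) :=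
  nseq (m - size r) None ++ map Some r.

Definition enc d (v : 'I_d -> nat) : seq (pad_letter Sigma d) :=
  mkseq (fun p => [ffun i => nth None (lpad (enc_len v) (rep S (v i))) p]) (enc_len v).

Lemma rep_tupleE d (t : d.-tuple nat) : rep_tuple S t = enc (tnth t).
Proof. by []. Qed.

Definition blank d : pad_letter Sigma d := [ffun _ => None].
Definition proj d e (h : 'I_d -> 'I_e) (c : pad_letter Sigma e) : pad_letter Sigma d :=
  [ffun j => c (h j)].

Lemma size_enc d (v : 'I_d -> nat) : size (enc v) = enc_len v.
Proof. by rewrite size_mkseq. Qed.

Lemma enc_len_ge d (v : 'I_d -> nat) i : size (rep S (v i)) <= enc_len v.
Proof. exact: (leq_bigmax (F := fun i => size (rep S (v i)))). Qed.

Lemma enc_len_comp d e (h : 'I_d -> 'I_e) (v : 'I_e -> nat) :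
  enc_len (fun j => v (h j)) <= enc_len v.
Proof. by apply/bigmax_leqP => i _; apply: enc_len_ge. Qed.

Lemma lpad_shift M m r : size r <= m -> m <= M ->
  lpad M r = nseq (M - m) None ++ lpad m r.
Proof.
move=> Hr HmM; rewrite /lpad catA -nseqD; congr (nseq _ _ ++ _).
by rewrite addnBA // subnK.
Qed.

Lemma enc_proj d e (h : 'I_d -> 'I_e) (v : 'I_e -> nat) :
  map (proj h) (enc v) =
  nseq (enc_len v - enc_len (fun j => v (h j))) (blank d) ++ enc (fun j => v (h j)).
Proof.
have Hle := enc_len_comp h v.
apply: (@eq_from_nth _ (blank d)).
  by rewrite size_map size_cat size_nseq !size_enc subnK.
move=> p; rewrite size_map size_enc => Hp.
rewrite (nth_map (blank e)) ?size_enc // nth_mkseq // nth_cat size_nseq.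
apply/ffunP => j; rewrite !ffunE.
rewrite (@lpad_shift (enc_len v) (enc_len (fun j => v (h j)))) //; last first.
  exact: (enc_len_ge (fun j => v (h j)) j).
rewrite nth_cat size_nseq; case: ifP => Hp2; first by rewrite !nth_nseq Hp2 ffunE.
rewrite /enc nth_mkseq ?ffunE //.
by move/negbT: Hp2; rewrite -leqNgt => Hp2; rewrite ltn_subLR // subnK.
Qed.

(* Some component attains the maximal length, so encodings are unpadded. *)
Lemma enc_unpadded d (v : 'I_d -> nat) : unpadded (blank d) (enc v).
Proof.
rewrite /enc; case Hm: (enc_len v) => [|m] //=.
have Hd : 0 < #|'I_d|.
  by rewrite card_ord; case: d v Hm => // v; rewrite /enc_len big_ord0.
have [i0 Hi0] := eq_bigmax (fun i => size (rep S (v i))) Hd.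
apply/eqP => /ffunP /(_ i0); rewrite !ffunE.
rewrite /lpad -Hm /enc_len Hi0 subnn /=.
by move: Hi0; rewrite -/(enc_len v) Hm; case: (rep S (v i0)).
Qed.

Lemma unpad_enc_proj d e (h : 'I_d -> 'I_e) (v : 'I_e -> nat) :
  unpad (blank d) (map (proj h) (enc v)) = enc (fun j => v (h j)).
Proof. by rewrite enc_proj unpad_nseq unpad_id // enc_unpadded. Qed.

Lemma enc1 (u : 'I_1 -> nat) :
  map (fun c : pad_letter Sigma 1 => c ord0) (enc u) = map Some (rep S (u ord0)).
Proof.
have Hm : enc_len u = size (rep S (u ord0)) by rewrite /enc_len big_ord1.
apply: (@eq_from_nth _ None); first by rewrite size_map size_enc Hm size_map.
move=> p; rewrite size_map size_enc => Hp.
by rewrite (nth_map (blank 1)) ?size_enc // /enc nth_mkseq // ffunE /lpad Hm subnn.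
Qed.

Lemma enc_inj d : injective (@enc d).
Proof.
move=> v v' Hvv'; apply: funext => i.
have := unpad_enc_proj (fun _ : 'I_1 => i) v; rewrite Hvv' unpad_enc_proj => H1.
have := congr1 (map (fun c : pad_letter Sigma 1 => c ord0)) H1; rewrite !enc1 /=.
by move/(inj_map (fun a b (E : Some a = Some b) => Some_inj E))/rep_inj.
Qed.

Definition recog d (P : ('I_d -> nat) -> Prop) :=
  regular (fun w => exists v, P v /\ enc v = w).

Lemma recog_ext d (P Q : ('I_d -> nat) -> Prop) :
  (forall v, P v <-> Q v) -> recog P -> recog Q.
Proof. by move=> HPQ; apply: regular_ext => w; split; case=> v [/HPQ Hv Hw]; exists v. Qed.

Lemma recog_and d (P Q : ('I_d -> nat) -> Prop) :
  recog P -> recog Q -> recog (fun v => P v /\ Q v).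
Proof.
move=> HP HQ; apply: regular_ext (regular_and HP HQ) => w; split.
  by case=> [[v [Hv <-]] [v' [Hv' /enc_inj E]]]; subst v'; exists v.
by case=> v [[Hp Hq] <-]; split; exists v.
Qed.

Lemma recog_or d (P Q : ('I_d -> nat) -> Prop) :
  recog P -> recog Q -> recog (fun v => P v \/ Q v).
Proof.
move=> HP HQ; apply: regular_ext (regular_or HP HQ) => w; split.
  by case=> [[v [Hv <-]]|[v [Hv <-]]]; exists v; split => //; [left|right].
by case=> v [[Hp|Hq] <-]; [left|right]; exists v.
Qed.

(* Complementation is relative to the set of all encodings. *)
Lemma recog_not d (P : ('I_d -> nat) -> Prop) :
  recog (fun _ : 'I_d -> nat => True) -> recog P -> recog (fun v => ~ P v).
Proof.
move=> HT HP; apply: regular_ext (regular_and HT (regular_compl HP)) => w; split.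
  by case=> [[v [_ <-]] HN]; exists v; split => // Hv; apply: HN; exists v.
case=> v [Hv <-]; split; first by exists v.
by case=> v' [Hv' /enc_inj E]; subst v'.
Qed.

Lemma recog_rename d e (h : 'I_d -> 'I_e) (P : ('I_d -> nat) -> Prop) :
  recog (fun _ : 'I_e -> nat => True) -> recog P -> recog (fun u => P (fun j => u (h j))).
Proof.
move=> HT HP.
apply: regular_ext (regular_and HT (regular_preim (proj h) (regular_unpad_preim (blank d) HP))).
move=> w; split.
  case=> [[u [_ <-]] [v [Hv]]]; rewrite unpad_enc_proj => /enc_inj E; subst v.
  by exists u.
case=> u [Hu <-]; split; first by exists u.
by exists (fun j => u (h j)); rewrite unpad_enc_proj.
Qed.

Definition ext d (v : 'I_d -> nat) (n : nat) (i : 'I_d.+1) : nat :=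
  if unlift ord_max i is Some j then v j else n.

Lemma ext_max d (v : 'I_d -> nat) n : ext v n ord_max = n.
Proof. by rewrite /ext unlift_none. Qed.

(* Existential projection of the last coordinate: erase it and unpad. *)
Lemma recog_ex d (P : ('I_d.+1 -> nat) -> Prop) :
  recog P -> recog (fun v => exists n, P (ext v n)).
Proof.
move=> HP; pose pr := proj (fun j : 'I_d => lift ord_max j).
apply: regular_ext (regular_unpad_image (blank d) (regular_image pr HP)) => u; split.
  case=> w' [[w [[v' [Hv' <-]] <-]] <-]; rewrite unpad_enc_proj.
  exists (fun j => v' (lift ord_max j)); split => //; exists (v' ord_max).
  suff -> : ext (fun j => v' (lift ord_max j)) (v' ord_max) = v' by [].
  by apply: funext => i; rewrite /ext; case: unliftP => [j ->|->].
case=> v [[n Hn] <-]; exists (map pr (enc (ext v n))); split.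
  by exists (enc (ext v n)); split => //; exists (ext v n).
by rewrite unpad_enc_proj; congr enc; apply: funext => j; rewrite /ext liftK.
Qed.

Lemma enc_of_coordinates d (w : seq (pad_letter Sigma d)) (v : 'I_d -> nat) :
  unpadded (blank d) w ->
  (forall i, exists k, map (proj (fun _ : 'I_1 => i)) w =
                       nseq k (blank 1) ++ enc (fun _ : 'I_1 => v i)) ->
  enc v = w.
Proof.
move=> Hw Hdec.
have Hlen1 i : enc_len (fun _ : 'I_1 => v i) = size (rep S (v i)).
  by rewrite /enc_len big_ord1.
have Hsize : size w = enc_len v.
  apply/eqP; rewrite eqn_leq; apply/andP; split; last first.
    apply/bigmax_leqP => i _; have [k Hk] := Hdec i.
    by rewrite -(size_map (proj (fun _ : 'I_1 => i))) Hk size_cat size_enc Hlen1 leq_addl.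
  case: w Hw Hdec => [|a w'] // Hw Hdec.
  have [i Hi] : exists i, a i != None.
    apply/existsP; apply: contraR Hw; rewrite negb_exists => /forallP Ha.
    by apply/eqP/ffunP => i; rewrite ffunE; exact/eqP/negPn/Ha.
  have [[|k] Hk] := Hdec i.
    by rewrite -(size_map (proj (fun _ : 'I_1 => i))) Hk /= size_enc Hlen1 enc_len_ge.
  by move: Hk => /= [] /ffunP /(_ ord0); rewrite !ffunE => Hai; rewrite Hai in Hi.
have Hproj i : map (proj (fun _ : 'I_1 => i)) w = map (proj (fun _ : 'I_1 => i)) (enc v).
  have [k Hk] := Hdec i; rewrite Hk enc_proj; congr (_ ++ _).
  have := congr1 size Hk; rewrite size_map size_cat size_nseq size_enc Hsize => Hs.
  by rewrite Hs addnK.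
apply: (@eq_from_nth _ (blank d)); first by rewrite size_enc Hsize.
move=> p Hp; have Hpw : p < size w by rewrite Hsize -size_enc.
apply/ffunP => i; have := congr1 (fun s => nth (blank 1) s p) (Hproj i).
rewrite /= !(nth_map (blank d)) //.
by move/ffunP/(_ ord0); rewrite !ffunE.
Qed.

Lemma enc_charac d (w : seq (pad_letter Sigma d)) :
  (exists v : 'I_d -> nat, enc v = w) <->
  unpadded (blank d) w /\ forall i : 'I_d, exists n : 'I_1 -> nat,
      enc n = unpad (blank 1) (map (proj (fun _ : 'I_1 => i)) w).
Proof.
split.
  case=> v <-; split; first exact: enc_unpadded.
  by move=> i; exists (fun _ => v i); rewrite unpad_enc_proj.
case=> Hw /fin_all_exists [f Hf]; exists (fun i => f i ord0).
apply: enc_of_coordinates => // i.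
have [k Hk] := unpad_decomp (blank 1) (map (proj (fun _ : 'I_1 => i)) w).
exists k; rewrite Hk -Hf; congr (_ ++ enc _).
by apply: funext => o; rewrite (ord1 o).
Qed.

Lemma recog_all d : recog (fun _ : 'I_1 -> nat => True) -> recog (fun _ : 'I_d -> nat => True).
Proof.
move=> HT1.
have HL : regular (fun u : seq (pad_letter Sigma 1) => exists n : 'I_1 -> nat, enc n = u).
  by apply: regular_ext HT1 => u; split; case=> n; [case=> _|]; exists n.
apply: regular_ext (regular_and (regular_unpadded (blank d)) (regular_all
   (fun i : 'I_d => regular_preim (proj (fun _ : 'I_1 => i)) (regular_unpad_preim (blank 1) HL)))).
move=> w; split; first by move/enc_charac => [v Hv]; exists v.
by case=> v [_ Hv]; apply/enc_charac; exists v.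
Qed.

End Encoding.

Definition env := nat -> nat.

Definition env_of d (v : 'I_d -> nat) : env :=
  fun y => if (insub y : option 'I_d) is Some j then v j else 0.

Lemma env_of_lt d (v : 'I_d -> nat) y (Hy : y < d) : env_of v y = v (Ordinal Hy).
Proof. by rewrite /env_of insubT. Qed.

Lemma env_of_inord d (v : 'I_d.+1 -> nat) y : y < d.+1 -> env_of v y = v (inord y).
Proof. by move=> Hy; rewrite env_of_lt; congr v; apply: val_inj; rewrite /= inordK. Qed.

Lemma ext_inord d (v : 'I_d -> nat) n y : y < d -> ext v n (inord y) = env_of v y.
Proof.
move=> Hy; have Hval : nat_of_ord (inord y : 'I_d.+1) = y by rewrite inordK // ltnS ltnW.
rewrite /ext; case: unliftP => [j Hj|Hj]; last by move: Hval; rewrite Hj /= => E; lia.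
rewrite (env_of_lt v Hy); congr v; apply: val_inj => /=.
by move: Hval; rewrite Hj /= /bump leqNgt (ltn_ord j) add0n.
Qed.

Definition upd (e : env) (z n : nat) : env := fun y => if y == z then n else e y.

Lemma upd_eq e z n : upd e z n z = n.
Proof. by rewrite /upd eqxx. Qed.

Lemma upd_ne e z n y : y != z -> upd e z n y = e y.
Proof. by rewrite /upd => /negbTE ->. Qed.

Ltac updsimp := repeat (rewrite upd_eq || (rewrite upd_ne; last by lia)).

Definition depends_on (P : env -> Prop) d :=
  forall e e', (forall y, y < d -> e y = e' y) -> (P e <-> P e').

Lemma depends_on_mono P d d' : depends_on P d -> d <= d' -> depends_on P d'.
Proof. by move=> HP Hd e e' He; apply: HP => y Hy; apply: He; exact: leq_trans Hy Hd. Qed.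

Lemma depends_on_tr P d e e' :
  depends_on P d -> (forall y, y < d -> e y = e' y) -> P e -> P e'.
Proof. by move=> HP He; case: (HP e e' He). Qed.

(* First-order definable predicates are recognizable: every predicate built
   from the atoms x+y=z and x_y = a with connectives and quantifiers depends
   on finitely many variables, and restricted to any large enough finite set
   of variables it is an S-recognizable relation. *)
Section Definable.
Variables (Sigma A : finType) (S : ANS Sigma) (x : nat -> A).
Hypothesis lang_recog : recog S (fun _ : 'I_1 -> nat => True).
Hypothesis add_recog :
  recog S (fun v : 'I_3 -> nat => v (inord 2) = v (inord 0) + v (inord 1)).
Hypothesis letter_recog : forall a, recog S (fun v : 'I_1 -> nat => x (v ord0) = a).

Definition definable (P : env -> Prop) :=
  exists d, depends_on P d /\ forall d', d <= d' -> recog S (fun v : 'I_d' -> nat => P (env_of v)).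

Let all_recog d : recog S (fun _ : 'I_d -> nat => True).
Proof. exact: recog_all. Qed.

Lemma definable_ext P Q : (forall e, P e <-> Q e) -> definable P -> definable Q.
Proof.
move=> HPQ [d [Hd HP]]; exists d; split; first by move=> e e' He; rewrite -!HPQ; apply: Hd.
by move=> d' Hd'; apply: recog_ext (HP d' Hd') => v; exact: HPQ.
Qed.

Lemma definable_const (C : Prop) : definable (fun _ => C).
Proof.
exists 0; split => // d' _; case: (pselect C) => HC; first by apply: recog_ext (all_recog d').
by apply: regular_ext (regular_const _ False) => w; split => //; case=> v [].
Qed.

Lemma definable_and P Q : definable P -> definable Q -> definable (fun e => P e /\ Q e).
Proof.
move=> [d1 [H1 R1]] [d2 [H2 R2]]; exists (maxn d1 d2); split.
  move=> e e' He.
  by rewrite (depends_on_mono H1 (leq_maxl d1 d2) He) (depends_on_mono H2 (leq_maxr d1 d2) He).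
by move=> d' /[!geq_max] /andP[Hd1 Hd2]; exact: recog_and (R1 _ Hd1) (R2 _ Hd2).
Qed.

Lemma definable_or P Q : definable P -> definable Q -> definable (fun e => P e \/ Q e).
Proof.
move=> [d1 [H1 R1]] [d2 [H2 R2]]; exists (maxn d1 d2); split.
  move=> e e' He.
  by rewrite (depends_on_mono H1 (leq_maxl d1 d2) He) (depends_on_mono H2 (leq_maxr d1 d2) He).
by move=> d' /[!geq_max] /andP[Hd1 Hd2]; exact: recog_or (R1 _ Hd1) (R2 _ Hd2).
Qed.

Lemma definable_not P : definable P -> definable (fun e => ~ P e).
Proof.
move=> [d [HP R]]; exists d; split; first by move=> e e' He; rewrite (HP _ _ He).
by move=> d' Hd'; exact: recog_not (all_recog d') (R _ Hd').
Qed.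

(* The quantified variable z is moved to an extra last coordinate, which is
   then projected away. *)
Lemma definable_ex z P : definable P -> definable (fun e => exists n, P (upd e z n)).
Proof.
move=> [d [HP R]]; exists d; split.
  move=> e e' He; split; case=> n Hn; exists n; apply: (depends_on_tr HP _ Hn) => y Hy;
    rewrite /upd; case: eqP => // _; [|symmetry]; exact: He.
move=> d' Hd'; pose D := maxn d' z.+1.
have HD : d <= D by apply: leq_trans Hd' (leq_maxl _ _).
pose h (y : 'I_D) : 'I_d'.+1 := if (val y < d') && (val y != z) then inord (val y) else ord_max.
have Hh v n y : y < d -> env_of (fun j => ext v n (h j)) y = upd (env_of v) z n y.
  move=> Hy; have HyD : y < D := leq_trans Hy HD.
  rewrite (env_of_lt _ HyD) /h /= /upd; case: eqP => [->|/eqP Hz]; first by rewrite andbF ext_max.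
  by rewrite andbT (leq_trans Hy Hd') ext_inord // (leq_trans Hy Hd').
apply: recog_ext (recog_ex (recog_rename h (all_recog d'.+1) (R D HD))) => v.
by split; case=> n Hn; exists n; apply: (depends_on_tr HP _ Hn) => y Hy; rewrite Hh.
Qed.

Lemma definable_add i j k : definable (fun e => e k = e i + e j).
Proof.
pose b := (maxn (maxn i j) k).+1.
have [Hi Hj Hk] : [/\ i < b, j < b & k < b] by rewrite /b; split; lia.
exists b; split; first by move=> e e' He; rewrite !He.
case=> [|d'] Hd'; first by move: Hd'; rewrite /b.
have [Hi' Hj' Hk'] : [/\ i < d'.+1, j < d'.+1 & k < d'.+1] by split; lia.
pose h (y : 'I_3) : 'I_d'.+1 := inord (nth 0 [:: i; j; k] y).
apply: recog_ext (recog_rename h (all_recog _) add_recog) => v.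
by rewrite /h !inordK // !env_of_inord.
Qed.

Lemma definable_letter i a : definable (fun e => x (e i) = a).
Proof.
exists i.+1; split; first by move=> e e' He; rewrite He.
case=> [|d'] Hd' //.
apply: recog_ext (recog_rename (fun _ : 'I_1 => inord i : 'I_d'.+1) (all_recog _) (letter_recog a)).
by move=> v; rewrite env_of_inord.
Qed.

(* A definable predicate depending on the first i variables is recognizable
   as a relation of arity i: the superfluous variables are projected away. *)
Lemma definable_recog i P :
  definable P -> depends_on P i -> recog S (fun v : 'I_i -> nat => P (env_of v)).
Proof.
move=> [d [_ R]] Hi.
have : recog S (fun v : 'I_(i + (d - i)) -> nat => P (env_of v)).
  by apply: R; rewrite -leq_subLR.
elim: (d - i) => [|n IH]; first by rewrite addn0.
have Hext (v : 'I_(i + n) -> nat) m y : y < i -> env_of (ext v m) y = env_of v y.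
  by move=> Hy; rewrite env_of_inord ?ext_inord //; lia.
rewrite addnS => /recog_ex Hex; apply: IH; apply: recog_ext Hex => v; split.
  by case=> m Hm; apply: (depends_on_tr Hi _ Hm) => y Hy; apply: Hext.
by move=> Hv; exists 0; apply: (depends_on_tr Hi _ Hv) => y Hy; rewrite Hext.
Qed.

Lemma definable_imp P Q : definable P -> definable Q -> definable (fun e => P e -> Q e).
Proof.
move=> HP HQ; apply: definable_ext (definable_or (definable_not HP) HQ) => e; split.
  by case=> HPQ //= /HPQ.
by case: (pselect (P e)) => HPe Himp; [right; exact: Himp|left].
Qed.

Lemma definable_all z P : definable P -> definable (fun e => forall n, P (upd e z n)).
Proof.
move=> HP; apply: definable_ext (definable_not (definable_ex z (definable_not HP))) => e; split.
  by move=> Hn n; case: (pselect (P (upd e z n))) => // HPn; case: Hn; exists n.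
by move=> Hall [n]; apply.
Qed.

(* Quantification over a finite type is a finite disjunction / conjunction. *)
Lemma definable_exfin (T : finType) (P : T -> env -> Prop) :
  (forall t, definable (P t)) -> definable (fun e => exists t, P t e).
Proof.
move=> HP; suff: definable (fun e => exists2 t, t \in enum T & P t e).
  apply: definable_ext => e; split; first by case=> t _; exists t.
  by case=> t Ht; exists t; rewrite ?mem_enum.
elim: (enum T) => [|t s IH].
  by apply: definable_ext (definable_const False) => e; split => // [[]].
apply: definable_ext (definable_or (HP t) IH) => e; split.
  by case=> [Ht|[t' Ht' Hp]]; [exists t; rewrite ?mem_head|exists t'; rewrite // inE Ht' orbT].
by case=> t'; rewrite inE => /orP[/eqP ->|Ht'] Hp; [left|right; exists t'].
Qed.

Lemma definable_allfin (T : finType) (P : T -> env -> Prop) :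
  (forall t, definable (P t)) -> definable (fun e => forall t, P t e).
Proof.
move=> HP.
apply: definable_ext (definable_not (definable_exfin (fun t => definable_not (HP t)))) => e.
split; last by move=> Hall [t]; apply.
by move=> Hn t; case: (pselect (P t e)) => // HPt; case: Hn; exists t.
Qed.

Lemma definable_le a b : definable (fun e => e a <= e b).
Proof.
pose z := (maxn a b).+1.
have [Ha Hb] : a != z /\ b != z by rewrite /z; split; lia.
apply: definable_ext (definable_ex z (definable_add a z b)) => e; split.
  by case=> n; rewrite upd_eq !upd_ne // => ->; rewrite leq_addr.
by move=> Hab; exists (e b - e a); rewrite upd_eq !upd_ne // subnKC.
Qed.

Lemma definable_eq a b : definable (fun e => e a = e b).
Proof.
apply: definable_ext (definable_and (definable_le a b) (definable_le b a)) => e.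
by split => [[H1 H2]|->] //; apply/eqP; rewrite eqn_leq H1 H2.
Qed.

Lemma definable_lt a b : definable (fun e => e a < e b).
Proof.
apply: definable_ext (definable_not (definable_le b a)) => e.
by rewrite ltnNge; split => /negP.
Qed.

Lemma definable_count (s : seq nat) m c :
  definable (fun e => count (fun k => e k == e m) s = c).
Proof.
elim: s c => [|k s IH] c /=; first exact: definable_const.
apply: definable_ext (definable_or
   (definable_and (definable_eq k m) (definable_and (definable_const (0 < c)) (IH c.-1)))
   (definable_and (definable_not (definable_eq k m)) (IH c))) => e.
split; first by case=> [[-> [Hc ->]]|[/eqP/negbTE -> ->]] //; rewrite eqxx add1n prednK.
by case: eqP => [->|Hne] /=; [move=> <-; left|right].
Qed.

End Definable.

Section Game.
Variables (A : finType) (x : nat -> A).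

Definition wins (alpha : nat -> nat) (u : seq A) :=
  exists s : strategy A,
    (forall h, size u <= size h -> #|s h| = (alpha (size h)).+1) /\
    (forall a, prefix_of a (size u) = u ->
       (forall j, size u <= j -> a j \in s (prefix_of a j)) -> orbit_closure x a).

Definition factor q j := mkseq (fun l => x (q + l)) j.

Lemma prefixS (a : nat -> A) j : prefix_of a j.+1 = rcons (prefix_of a j) (a j).
Proof. exact: mkseqS. Qed.

Lemma size_prefix (a : nat -> A) j : size (prefix_of a j) = j.
Proof. exact: size_mkseq. Qed.

Lemma nth_prefix (a : nat -> A) j l x0 : l < j -> nth x0 (prefix_of a j) l = a l.
Proof. by move=> Hl; rewrite /prefix_of nth_mkseq. Qed.

Lemma winning_shift_wins alpha : winning_shift (orbit_closure x) alpha <-> wins alpha [::].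
Proof.
split; case=> s [H1 H2]; exists s; split.
- by move=> h _; apply: H1.
- by move=> a _ Ha; apply: H2 => j; apply: Ha.
- by move=> h; apply: H1.
- by move=> a Ha; apply: H2.
Qed.

Fixpoint play (s : strategy A) (u : seq A) (n : nat) : seq A :=
  if n is n'.+1 then
    rcons (play s u n') (if n' < size u then nth (x 0) u n'
                          else odflt (x 0) [pick z in s (play s u n')])
  else [::].

Lemma size_play s u n : size (play s u n) = n.
Proof. by elim: n => //= n IH; rewrite size_rcons IH. Qed.

Lemma nth_play s u n j : j < n -> nth (x 0) (play s u n) j = nth (x 0) (play s u j.+1) j.
Proof.
elim: n => // n IH; rewrite ltnS leq_eqVlt => /orP[/eqP ->|Hj] //.
by rewrite /= nth_rcons size_play Hj IH.
Qed.

Lemma play_take s u n : n <= size u -> play s u n = take n u.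
Proof.
elim: n => [|n IH] Hn /=; first by rewrite take0.
by rewrite IH ?(ltnW Hn) // Hn (take_nth (x 0)).
Qed.

(* A winning position is a factor of x: some play through it lies in X. *)
Lemma wins_factor alpha u : wins alpha u -> exists q, u = factor q (size u).
Proof.
case=> s [H1 H2]; pose a j := nth (x 0) (play s u j.+1) j.
have Hpre j : prefix_of a j = play s u j.
  apply: (@eq_from_nth _ (x 0)); first by rewrite size_prefix size_play.
  by move=> l; rewrite size_prefix => Hl; rewrite nth_prefix // /a (nth_play _ _ Hl).
have Hu : prefix_of a (size u) = u by rewrite Hpre play_take // take_size.
have : orbit_closure x a.
  apply: H2 => // j Hj; rewrite Hpre /a /= nth_rcons size_play ltnn eqxx ltnNge Hj /=.
  case: pickP => [z Hz //|Hn].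
  have : 0 < #|s (play s u j)| by rewrite H1 // size_play.
  by case/card_gt0P => z Hz; move: (Hn z); rewrite Hz.
move/(_ (size u)) => [q Hq]; exists q.
rewrite -{1}Hu; apply: (@eq_from_nth _ (x 0)); first by rewrite size_prefix size_mkseq.
by move=> l; rewrite size_prefix => Hl; rewrite nth_prefix // nth_mkseq // Hq.
Qed.

Lemma wins_of_move alpha u (T : {set A}) :
  #|T| = (alpha (size u)).+1 -> (forall z, z \in T -> wins alpha (rcons u z)) ->
  wins alpha u.
Proof.
move=> HT Hwin.
have [z0 Hz0] : exists z0, z0 \in T by apply/card_gt0P; rewrite HT.
have Hc z : exists s : strategy A,
    (forall h, (size u).+1 <= size h -> #|s h| = (alpha (size h)).+1) /\
    (z \in T -> forall a, prefix_of a (size u).+1 = rcons u z ->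
       (forall j, (size u).+1 <= j -> a j \in s (prefix_of a j)) -> orbit_closure x a).
  case: (boolP (z \in T)) => Hz.
    by have [s [H1 H2]] := Hwin z Hz; exists s; rewrite size_rcons in H1 H2.
  by have [s [H1 _]] := Hwin z0 Hz0; exists s; rewrite size_rcons in H1.
have [F HF] := fin_all_exists Hc.
exists (fun h => if size h == size u then T else F (nth (x 0) h (size u)) h); split.
  move=> h Hh; case: eqP => [Heq|/eqP Hne]; first by rewrite HT Heq.
  by apply: (HF _).1; rewrite ltn_neqAle eq_sym Hne.
move=> a Ha Hf.
have HzT : a (size u) \in T by have := Hf (size u) (leqnn _); rewrite size_prefix eqxx.
apply: (HF (a (size u))).2 => //; first by rewrite prefixS Ha.
move=> j Hj; have := Hf j (ltnW Hj); rewrite size_prefix eqn_leq leqNgt Hj /=.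
by rewrite nth_prefix.
Qed.

Lemma wins_step alpha u :
  wins alpha u <-> exists T : {set A}, #|T| = (alpha (size u)).+1 /\
                   forall z, z \in T -> wins alpha (rcons u z).
Proof.
split; last by case=> T [HT Hwin]; exact: wins_of_move HT Hwin.
case=> s [H1 H2]; exists (s u); split; first exact: H1.
move=> z Hz; exists s; split.
  by move=> h; rewrite size_rcons => Hh; apply: H1; apply: ltnW.
move=> a; rewrite size_rcons prefixS => /rcons_inj [Ha Haz] Hf.
apply: H2 => // j; rewrite leq_eqVlt => /orP[/eqP <-|Hj]; first by rewrite Ha Haz.
exact: Hf.
Qed.

(* Once alpha vanishes, Alice wins from any factor of x by continuing it. *)
Lemma wins_end alpha u q :
  (forall j, size u <= j -> alpha j = 0) -> u = factor q (size u) -> wins alpha u.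
Proof.
move=> Hz Hu; exists (fun h => [set x (q + size h)]); split.
  by move=> h Hh; rewrite cards1 Hz.
move=> a Ha Hf k; exists q => i _.
case: (ltnP i (size u)) => Hi; first by rewrite -(nth_prefix a (x 0) Hi) Ha Hu nth_mkseq.
by have := Hf i Hi; rewrite inE size_prefix => /eqP.
Qed.

(* During n rounds where alpha vanishes Alice chooses the letters herself. *)
Lemma wins_gap alpha n u :
  (forall j, size u <= j < size u + n -> alpha j = 0) ->
  (wins alpha u <-> exists v, size v = n /\ wins alpha (u ++ v)).
Proof.
elim: n u => [|n IH] u Hz.
  by split; [move=> H; exists [::]; rewrite cats0|case=> v [/size0nil ->]; rewrite cats0].
have H0 : alpha (size u) = 0 by apply: Hz; rewrite leqnn addnS ltnS leq_addr.
have Hz' z j : size (rcons u z) <= j < size (rcons u z) + n -> alpha j = 0.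
  by rewrite size_rcons addSnnS => /andP[H1 H2]; apply: Hz; rewrite H2 ltnW.
rewrite wins_step H0; split.
  case=> T [/eqP/cards1P [z ->] Hwin].
  have [v [Hv Hwin']] := (IH _ (Hz' z)).1 (Hwin z (set11 z)).
  by exists (z :: v); rewrite /= Hv -cat_rcons.
case=> [[|z v]] [//= [Hv] Hwin].
exists [set z]; rewrite cards1; split => // z'; rewrite inE => /eqP ->.
by apply/(IH _ (Hz' z)); exists v; rewrite cat_rcons.
Qed.

Lemma wins_start alpha r : (forall j, j < r -> alpha j = 0) ->
  (wins alpha [::] <-> exists q, wins alpha (factor q r)).
Proof.
move=> Hz; have Hgap j : size ([::] : seq A) <= j < size ([::] : seq A) + r -> alpha j = 0.
  by move=> /andP[_ Hj]; exact: Hz.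
rewrite (wins_gap Hgap).
split; last by case=> q Hwin; exists (factor q r); rewrite size_mkseq.
by case=> v [Hv Hwin]; have [q Hq] := wins_factor Hwin; exists q; rewrite -Hv -Hq.
Qed.

Lemma factor_eq q q' j :
  (forall l, l < j -> x (q + l) = x (q' + l)) -> factor q j = factor q' j.
Proof.
move=> H; apply: (@eq_from_nth _ (x 0)); rewrite !size_mkseq // => l Hl.
by rewrite !nth_mkseq // H.
Qed.

Lemma factor_eqP q q' j :
  factor q j = factor q' j -> forall l, l < j -> x (q + l) = x (q' + l).
Proof.
by move=> H l Hl; have := congr1 (fun s => nth (x 0) s l) H; rewrite /= !nth_mkseq.
Qed.

Lemma take_factor q k j : k <= j -> take k (factor q j) = factor q k.
Proof.
move=> H; apply: (@eq_from_nth _ (x 0)); first by rewrite size_takel !size_mkseq.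
move=> l; rewrite size_takel ?size_mkseq // => Hl.
by rewrite nth_take // !nth_mkseq //; lia.
Qed.

Lemma factorS q j : factor q j.+1 = rcons (factor q j) (x (q + j)).
Proof. exact: mkseqS. Qed.

(* Extending a winning factor by a letter a: as winning positions are
   factors, the result is again a factor of x, at some other position q1. *)
Lemma wins_rcons_factor alpha q j a :
  wins alpha (rcons (factor q j) a) <->
  exists q1, (forall l, l < j -> x (q1 + l) = x (q + l)) /\ x (q1 + j) = a /\
             wins alpha (factor q1 j.+1).
Proof.
split.
  move=> H; have [q1] := wins_factor H.
  rewrite size_rcons size_mkseq factorS => /rcons_inj [E1 E2].
  exists q1; split; first by move=> l Hl; symmetry; apply: factor_eqP E1 l Hl.
  by split; [rewrite -E2|rewrite factorS -E1 -E2].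
case=> q1 [Hag [Ha Hg]]; move: Hg; rewrite factorS Ha.
by rewrite (factor_eq (q := q1) (q' := q)).
Qed.

End Game.

(* The variables 0, ..., i-1 hold
   a nondecreasing tuple t, which encodes the choice sequence alpha = cnt t
   (alpha_j = number of k with t_k = j).  Only the rounds t_m matter; a
   position of length t_m is represented by a variable holding an occurrence
   q of it in x, i.e. the position is factor q t_m. *)
Section Formula.
Variables (A : finType) (x : nat -> A) (i : nat).

Definition cnt (e : env) j := count (fun k => e k == j) (iota 0 i).

Definition agree q q' n (b : bool) (e : env) :=
  forall l, (if b then l <= e n else l < e n) -> x (e q + l) = x (e q' + l).

Definition letter_after q m a (e : env) := x (e q + e m) = a.

(* Passing to the next block m' (the first index whose value exceeds e m):
   some occurrence z+1 continues the occurrence z, and R holds there. *)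
Definition to_next_block (R : nat -> nat -> nat -> env -> Prop) (m z : nat) (e1 : env) :=
  forall m' : 'I_i, m < m' -> e1 (m'.-1) = e1 m -> e1 m < e1 m' ->
    exists n2, agree z.+1 z m true (upd e1 z.+1 n2) /\ R m' z.+1 z.+2 (upd e1 z.+1 n2).

(* Bob's answer a at round e m: some occurrence z of the position qn extended
   by a, from which the play continues to the next block. *)
Definition answer (R : nat -> nat -> nat -> env -> Prop) (m qn z : nat) (a : A) (e1 : env) :=
  agree z qn m false e1 /\ letter_after z m a e1 /\ to_next_block R m z e1.

(* win_formula f m qn z: Alice wins from the position of length e m occurring
   at e qn; f bounds the number of remaining blocks, and the variables from z
   on are free for quantification. *)
Fixpoint win_formula (f m qn z : nat) (e : env) : Prop :=
  if f is f'.+1 then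
    exists T : {set A}, #|T| = (cnt e (e m)).+1 /\
      forall a, a \in T -> exists n1, answer (win_formula f') m qn z a (upd e z n1)
  else True.

End Formula.

Section FormulaDefinable.
Variables (Sigma A : finType) (S : ANS Sigma) (x : nat -> A) (i : nat).
Hypothesis lang_recog : recog S (fun _ : 'I_1 -> nat => True).
Hypothesis add_recog :
  recog S (fun v : 'I_3 -> nat => v (inord 2) = v (inord 0) + v (inord 1)).
Hypothesis letter_recog : forall a, recog S (fun v : 'I_1 -> nat => x (v ord0) = a).

Local Notation definable := (definable S).

Lemma definable_cnt m c : definable (fun e => c = (cnt i e (e m)).+1).
Proof.
apply: definable_ext (definable_and (definable_const lang_recog (0 < c))
                                   (definable_count lang_recog add_recog (iota 0 i) m c.-1)).
move=> e; rewrite /cnt; split; first by case=> Hc ->; rewrite prednK.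
by move=> ->; split.
Qed.

Lemma definable_agree q q' n b : definable (agree x q q' n b).
Proof.
pose w := (maxn q (maxn q' n)).+1.
have [Hq Hq' Hn] : [/\ q < w, q' < w & n < w] by rewrite /w; split; lia.
have Hbound : definable (fun e => if b then e w <= e n else e w < e n).
  by case: b; [apply: definable_le|apply: definable_lt].
have Hletters := definable_exfin lang_recog (fun a => definable_and
  (definable_letter lang_recog letter_recog w.+1 a) (definable_letter lang_recog letter_recog w.+2 a)).
have Hsums := definable_and (definable_add lang_recog add_recog q w w.+1)
  (definable_and (definable_add lang_recog add_recog q' w w.+2) Hletters).
apply: definable_ext (definable_all lang_recog w (definable_imp lang_recog Hbound
  (definable_ex lang_recog w.+1 (definable_ex lang_recog w.+2 Hsums)))).
move=> e; rewrite /agree; split => H l.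
  move=> Hl; have := H l; updsimp; move=> /(_ Hl) [r [r']].
  by updsimp; case=> -> [-> [a [-> ->]]].
updsimp => Hl; exists (e q + l); exists (e q' + l); updsimp; split => //; split => //.
by exists (x (e q + l)); updsimp; split => //; rewrite H.
Qed.

Lemma definable_letter_after q m a : definable (letter_after x q m a).
Proof.
pose w := (maxn q m).+1.
have [Hq Hm] : q < w /\ m < w by rewrite /w; split; lia.
apply: definable_ext (definable_ex lang_recog w (definable_and
  (definable_add lang_recog add_recog q m w) (definable_letter lang_recog letter_recog w a))).
move=> e; rewrite /letter_after; split; first by case=> n; updsimp; case=> ->.
by move=> H; exists (e q + e m); updsimp.
Qed.

Lemma definable_win_formula f m qn z : definable (win_formula x i f m qn z).
Proof.
elim: f m qn z => [|f IH] m qn z; first exact: definable_const.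
apply: (definable_exfin lang_recog) => T; apply: definable_and.
  by apply: definable_ext (definable_cnt m #|T|) => e; split => ->.
apply: (definable_allfin lang_recog) => a.
apply: (definable_imp lang_recog); first exact: definable_const.
apply: (definable_ex lang_recog z); apply: definable_and; first exact: definable_agree.
apply: definable_and; first exact: definable_letter_after.
apply: (definable_allfin lang_recog) => m'.
apply: (definable_imp lang_recog); first exact: definable_const.
apply: (definable_imp lang_recog); first exact: definable_eq.
apply: (definable_imp lang_recog); first exact: definable_lt.
apply: (definable_ex lang_recog z.+1
  (P := fun e2 => agree x z.+1 z m true e2 /\ win_formula x i f m' z.+1 z.+2 e2)).
by apply: definable_and; [exact: definable_agree|exact: IH].
Qed.

End FormulaDefinable.

Section FormulaSemantics.
Variables (A : finType) (x : nat -> A) (i : nat).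

Definition nondecr (e : env) := forall a b, a <= b -> b < i -> e a <= e b.

Lemma cnt0 (e : env) j : (forall k, k < i -> e k != j) -> cnt i e j = 0.
Proof.
move=> Hne; apply/eqP; rewrite -leqn0 leqNgt -has_count; apply/hasPn => k.
by rewrite mem_iota add0n => /andP[_ /Hne].
Qed.

Lemma cnt_upd (e : env) z n : i <= z -> cnt i (upd e z n) = cnt i e.
Proof.
move=> Hz; apply: funext => j; apply: eq_in_count => k.
by rewrite mem_iota add0n => /andP[_ Hk]; rewrite upd_ne //; lia.
Qed.

Lemma nondecr_upd (e : env) z n : i <= z -> nondecr e -> nondecr (upd e z n).
Proof. by move=> Hz He a b Hab Hb; rewrite !upd_ne; [exact: He| |]; lia. Qed.

Lemma cnt_between (e : env) m ms : nondecr e -> m < ms < i ->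
  e (ms.-1) = e m -> forall j, e m < j < e ms -> cnt i e j = 0.
Proof.
move=> He /andP[Hmms Hms] Hprev j /andP[Hj1 Hj2]; apply: cnt0 => k Hk; apply/eqP => Hkj.
case: (leqP k m) => Hkm; first by have := He k m Hkm (ltn_trans Hmms Hms); lia.
case: (ltnP k ms) => Hkms; last by have := He ms k Hkms Hk; lia.
by have := He k ms.-1 ltac:(lia) ltac:(lia); lia.
Qed.

Lemma cnt_after_last (e : env) m : nondecr e -> m < i ->
  ~ (exists k, m < k < i /\ e m < e k) -> forall j, e m < j -> cnt i e j = 0.
Proof.
move=> He Hm Hlast j Hj; apply: cnt0 => k Hk; apply/eqP => Hkj.
case: (leqP k m) => Hkm; first by have := He k m Hkm Hm; lia.
by apply: Hlast; exists k; split; lia.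
Qed.

Lemma next_block (e : env) m : nondecr e -> m < i ->
  (exists k, m < k < i /\ e m < e k) ->
  exists ms, [/\ m < ms < i, e (ms.-1) = e m & e m < e ms].
Proof.
move=> He Hm Hex.
have Hexb : exists k, (m < k < i) && (e m < e k) by case: Hex => k [H1 H2]; exists k; rewrite H1.
case: (ex_minnP Hexb) => ms /andP[Hbounds Hgt] Hmin; exists ms; split => //.
case: (ltnP m ms.-1) => Hpred; last by have -> : ms.-1 = m by lia.
have Hle : ~~ (e m < e ms.-1).
  by apply/negP => Hlt; have := Hmin ms.-1; rewrite Hpred Hlt /= => /(_ ltac:(lia)); lia.
by have := He m ms.-1 (ltnW Hpred) ltac:(lia); lia.
Qed.

Definition formula_correct f := forall m qn z e,
  nondecr e -> m < i -> i <= qn -> qn < z -> i - m <= f ->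
  (win_formula x i f m qn z e <-> wins x (cnt i e) (factor x (e qn) (e m))).

Section Step.
Variables (f : nat) (IH : formula_correct f).
Variables (m z : nat) (e : env) (n1 : nat).
Hypotheses (He : nondecr e) (Hm : m < i) (Hz : i < z) (Hf : i - m <= f.+1).

Lemma to_next_block_sound :
  to_next_block x i (win_formula x i f) m z (upd e z n1) -> wins x (cnt i e) (factor x n1 (e m).+1).
Proof.
move=> Hnext; have He1 := nondecr_upd n1 (ltnW Hz) He.
case: (pselect (exists k, m < k < i /\ e m < e k)) => [Hex|Hlast]; last first.
  apply: (wins_end (q := n1)); last by rewrite size_mkseq.
  by move=> j; rewrite size_mkseq; apply: cnt_after_last.
have [ms [/andP[Hms1 Hms2] Hprev Hgt]] := next_block He Hm Hex.
have [n2 []] : exists n2, agree x z.+1 z m true (upd (upd e z n1) z.+1 n2) /\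
    win_formula x i f ms z.+1 z.+2 (upd (upd e z n1) z.+1 n2).
  by apply: (Hnext (Ordinal Hms2)) => /=; updsimp.
rewrite /agree; updsimp => Hag2.
move/(@IH ms z.+1 z.+2 _ (nondecr_upd (z := z.+1) n2 ltac:(lia) He1) Hms2 ltac:(lia) ltac:(lia) ltac:(lia)).
rewrite !cnt_upd; try lia; updsimp => Hwin2.
have Hgap j : size (factor x n1 (e m).+1) <= j < size (factor x n1 (e m).+1) + (e ms - (e m).+1) ->
    cnt i e j = 0.
  by rewrite size_mkseq => Hj; apply: (cnt_between (m := m) (ms := ms)) => //; lia.
apply/(wins_gap _ Hgap); exists (drop (e m).+1 (factor x n2 (e ms))).
split; first by rewrite size_drop size_mkseq.
have -> : factor x n1 (e m).+1 = take (e m).+1 (factor x n2 (e ms)).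
  by rewrite take_factor; [apply: factor_eq => l Hl; rewrite Hag2|lia].
by rewrite cat_take_drop.
Qed.

Lemma to_next_block_complete :
  wins x (cnt i e) (factor x n1 (e m).+1) -> to_next_block x i (win_formula x i f) m z (upd e z n1).
Proof.
move=> Hwin [ms Hms2] /= Hms1; updsimp => Hprev Hgt.
have Hgap j : size (factor x n1 (e m).+1) <= j < size (factor x n1 (e m).+1) + (e ms - (e m).+1) ->
    cnt i e j = 0.
  by rewrite size_mkseq => Hj; apply: (cnt_between (m := m) (ms := ms)) => //; lia.
have [v [Hv Hwinv]] := (wins_gap _ Hgap).1 Hwin.
have [q2] := wins_factor Hwinv; rewrite size_cat size_mkseq Hv.
have -> : (e m).+1 + (e ms - (e m).+1) = e ms by lia.
move=> Hq2; exists q2; rewrite /agree; updsimp; split.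
  move=> l; updsimp => Hl.
  have := congr1 (take (e m).+1) Hq2; rewrite take_size_cat ?size_mkseq // take_factor; last by lia.
  by move/factor_eqP => Hag; rewrite Hag //; lia.
apply/IH; try lia.
  by apply: nondecr_upd; [lia|apply: nondecr_upd => //; lia].
by rewrite !cnt_upd; try lia; updsimp; rewrite -Hq2.
Qed.

End Step.

Lemma set_answers_iff (C : {set A} -> Prop) (X Y : A -> Prop) : (forall a, X a <-> Y a) ->
  ((exists T : {set A}, C T /\ forall a, a \in T -> X a) <->
   (exists T : {set A}, C T /\ forall a, a \in T -> Y a)).
Proof.
by move=> HXY; split; case=> T [HC HT]; exists T; split => // a Ha; apply/HXY; exact: HT.
Qed.

Lemma win_formula_correct f : formula_correct f.
Proof.
elim: f => [|f IH] m qn z e He Hm Hqn Hz Hf; first by lia.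
have Hiz : i < z by lia.
rewrite /= wins_step size_mkseq; apply: set_answers_iff => a.
rewrite wins_rcons_factor; split.
  case=> n1; rewrite /answer /agree /letter_after; updsimp => [[Hag [Hlet Hnext]]].
  exists n1; split; first by move=> l Hl; apply: Hag.
  by split => //; exact: (to_next_block_sound IH He Hm Hiz Hf Hnext).
case=> n1 [Hag [Hlet Hwin]]; exists n1; rewrite /answer /agree /letter_after; updsimp.
by do 2!split => //; exact: (to_next_block_complete IH He Hm Hiz Hf Hwin).
Qed.

End FormulaSemantics.

Section Atoms.
Variables (Sigma A : finType) (S : ANS Sigma) (x : nat -> A).

Lemma recognizable_recog d (Y : d.-tuple nat -> Prop) (P : ('I_d -> nat) -> Prop) :
  (forall t, Y t <-> P (tnth t)) -> (recognizable S Y <-> recog S P).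
Proof.
have Hmk (v : 'I_d -> nat) : tnth (mktuple v) = v by apply: funext => j; rewrite tnth_mktuple.
move=> HYP; split; apply: regular_ext => w; split.
- by case=> t [/HYP Ht <-]; exists (tnth t).
- by case=> v [Hv <-]; exists (mktuple v); rewrite HYP rep_tupleE Hmk.
- by case=> v [Hv <-]; exists (mktuple v); rewrite HYP rep_tupleE Hmk.
- by case=> t [/HYP Ht <-]; exists (tnth t).
Qed.

Lemma add_recog_of_addable : addable S ->
  recog S (fun v : 'I_3 -> nat => v (inord 2) = v (inord 0) + v (inord 1)).
Proof.
have Hord n j (Hj : j < n.+1) : inord j = Ordinal Hj by apply: val_inj; rewrite /= inordK.
by move=> Hadd; apply: ((recognizable_recog _).1 Hadd) => t;
  rewrite (@Hord 2 2 isT) (@Hord 2 0 isT) (@Hord 2 1 isT).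
Qed.

(* The language of S is the projection of the graph of addition: n = n + 0. *)
Lemma lang_recog_of_add :
  recog S (fun v : 'I_3 -> nat => v (inord 2) = v (inord 0) + v (inord 1)) ->
  recog S (fun _ : 'I_1 -> nat => True).
Proof.
move=> Hadd; apply: recog_ext (recog_ex (recog_ex Hadd)) => v; split => // _.
exists 0; exists (v ord0).
have H2 : inord 2 = ord_max :> 'I_3 by apply: val_inj; rewrite /= inordK.
have H1 : ext (ext v 0) (v ord0) (inord 1) = 0.
  have Hm1 : inord 1 = ord_max :> 'I_2 by apply: val_inj; rewrite /= inordK.
  by rewrite ext_inord // env_of_inord // Hm1 ext_max.
have H0 : ext (ext v 0) (v ord0) (inord 0) = v ord0.
  by rewrite ext_inord // env_of_inord // ext_inord // env_of_lt; congr v; apply: val_inj.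
by rewrite H2 ext_max H0 H1 addn0.
Qed.

(* The letters of an automatic word: run the automaton on the unique track. *)
Lemma letter_recog_of_automatic : automatic S x -> recog S (fun _ : 'I_1 -> nat => True) ->
  forall a, recog S (fun v : 'I_1 -> nat => x (v ord0) = a).
Proof.
move=> [Q [q0 [delta [out Hx]]]] HT a.
pose st (o : option Q) (c : option Sigma) :=
  if o is Some q then (if c is Some s then Some (delta q s) else None) else None.
have Hrun q r : foldl st (Some q) (map Some r) = Some (foldl delta q r).
  by elim: r q => //= s r IH q; rewrite IH.
pose D := mkDFA (Some q0) (fun o (c : pad_letter Sigma 1) => st o (c ord0))
  (fun o => if o is Some q then out q == a else false).
have HD : regular (dfa_accepts D) by exists D.
have HDenc v : dfa_accepts D (enc S v) = (out (foldl delta q0 (rep S (v ord0))) == a).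
  by rewrite /dfa_accepts /= -(foldl_map (fun c : pad_letter Sigma 1 => c ord0)) enc1 Hrun.
apply: regular_ext (regular_and HT HD) => w; split.
  by case=> [[v [_ <-]]]; rewrite HDenc => /eqP Ha; exists v; rewrite Hx.
by case=> v [Hv <-]; split; [exists v|rewrite HDenc -Hx Hv].
Qed.

End Atoms.

(* The top-level formula: the tuple is nondecreasing, and Alice wins from
   some occurrence of a position of length t_0 (before round t_0 all alpha_j
   vanish, so Alice chooses the letters herself). *)
Section TopFormula.
Variables (A : finType) (x : nat -> A) (i : nat).

Definition win_top (e : env) :=
  (forall a b : 'I_i, a <= b -> e a <= e b) /\ exists n, win_formula x i i 0 i i.+1 (upd e i n).

Lemma cnt_below_first (e : env) : nondecr i e -> 0 < i -> forall j, j < e 0 -> cnt i e j = 0.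
Proof. by move=> He Hi j Hj; apply: cnt0 => k Hk; have := He 0 k (leq0n _) Hk; lia. Qed.

Lemma win_top_correct e : win_top e <-> nondecr i e /\ wins x (cnt i e) [::].
Proof.
have Hnd : (forall a b : 'I_i, a <= b -> e a <= e b) <-> nondecr i e.
  split => [He a b Hab Hb|He a b Hab]; last by apply: He.
  have Ha : a < i by lia.
  exact: (He (Ordinal Ha) (Ordinal Hb)).
rewrite /win_top Hnd; case: (posnP i) => [Hi0|Hi].
  split; case=> He _; split => //; last by exists 0; rewrite Hi0.
  by apply: (wins_end (q := 0)) => // j _; apply: cnt0 => k; rewrite Hi0.
have Hformula (He : nondecr i e) n : win_formula x i i 0 i i.+1 (upd e i n) <-> wins x (cnt i e) (factor x n (e 0)).
  have He' : nondecr i (upd e i n) by exact: nondecr_upd.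
  move: (@win_formula_correct A x i i 0 i i.+1 _ He' Hi (leqnn i) (ltnSn i) ltac:(lia)).
  by rewrite cnt_upd //; updsimp.
split; case=> He Hwin; split => //.
  by apply/(wins_start x (cnt_below_first He Hi)); case: Hwin => n /(Hformula He); exists n.
by case/(wins_start x (cnt_below_first He Hi)): Hwin => n /(Hformula He); exists n.
Qed.

End TopFormula.

Lemma definable_win_top (Sigma A : finType) (S : ANS Sigma) (x : nat -> A) (i : nat) :
  recog S (fun _ : 'I_1 -> nat => True) ->
  recog S (fun v : 'I_3 -> nat => v (inord 2) = v (inord 0) + v (inord 1)) ->
  (forall a, recog S (fun v : 'I_1 -> nat => x (v ord0) = a)) ->
  definable S (win_top x i).
Proof.
move=> HL Hadd Hlet; apply: definable_and.
  apply: (definable_allfin HL) => a; apply: (definable_allfin HL) => b.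
  by apply: (definable_imp HL); [exact: definable_const|exact: definable_le].
by apply: (definable_ex HL); exact: definable_win_formula.
Qed.

Lemma win_top_depends (A : finType) (x : nat -> A) (i : nat) : depends_on (win_top x i) i.
Proof.
move=> e e' Hee'; rewrite !win_top_correct.
have -> : cnt i e = cnt i e'.
  apply: funext => j; apply: eq_in_count => k.
  by rewrite mem_iota add0n => /andP[_ Hk]; rewrite Hee'.
split; case=> He Hwin; split => // a b Hab Hb; have Ha : a < i by lia.
  by rewrite -!Hee' //; apply: He.
by rewrite !Hee' //; apply: He.
Qed.

Section Tuples.
Variables (i : nat) (t : i.-tuple nat).

Lemma mkseq_env_of : mkseq (env_of (tnth t)) i = t.
Proof.
apply: (@eq_from_nth _ 0); first by rewrite size_mkseq size_tuple.
by move=> l; rewrite size_mkseq => Hl; rewrite nth_mkseq // env_of_lt (tnth_nth 0).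
Qed.

Lemma count_env_of j : count (pred1 j) t = cnt i (env_of (tnth t)) j.
Proof.
by rewrite -{1}mkseq_env_of /mkseq count_map; apply: eq_count => k; rewrite /= eq_sym.
Qed.

Lemma sorted_env_of : sorted leq t <-> nondecr i (env_of (tnth t)).
Proof.
rewrite -{1}mkseq_env_of; split.
  move=> Hs a b Hab Hb.
  have := sorted_leq_nth leq_trans leqnn 0 Hs; rewrite size_mkseq => /(_ a b).
  by rewrite !inE !nth_mkseq //; [move=> /(_ ltac:(lia) Hb Hab)|lia].
move=> He; rewrite sorted_pairwise; last exact: leq_trans.
apply/(pairwiseP 0) => a b; rewrite !inE size_mkseq => Ha Hb Hab.
by rewrite !nth_mkseq //; apply: He => //; apply: ltnW.
Qed.

End Tuples.

Lemma mem_leq_sumn (s : seq nat) a : a \in s -> a <= sumn s.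
Proof.
elim: s => //= b s IH; rewrite inE => /orP[/eqP ->|/IH Has]; first exact: leq_addr.
exact: leq_trans Has (leq_addl _ _).
Qed.

Lemma sum_count_ord N (s : seq nat) : all (fun a => a < N) s ->
  \sum_(j < N) count (pred1 (j : nat)) s = size s.
Proof.
elim: s => [|a s IH] /=; first by rewrite big1.
case/andP => Ha Hs; rewrite big_split /= IH // (bigD1 (Ordinal Ha)) //= eqxx big1 // => j Hj.
by apply/eqP; rewrite eqb0; apply: contra Hj => /eqP E; apply/eqP/val_inj; rewrite /= E.
Qed.

Lemma sum_eq_count (s : seq nat) : Defs.sum_eq (fun j => count (pred1 j) s) (size s).
Proof.
exists (sumn s).+1; split; last by apply: sum_count_ord; apply/allP => a Ha; exact: mem_leq_sumn.
move=> j Hj; apply/eqP; rewrite -leqn0 leqNgt -has_count; apply/hasPn => a Ha /=.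
by apply/eqP => Eaj; have := mem_leq_sumn Ha; lia.
Qed.

Lemma codable_slice_iff (W : (nat -> nat) -> Prop) k i (t : i.-tuple nat) : i <= k ->
  (exists y, W y /\ (exists s, Defs.sum_eq y s /\ s <= k) /\ nu_is y t) <->
  sorted leq t /\ W (fun j => count (pred1 j) t).
Proof.
move=> Hik; split.
  case=> y [HW [_ [Hs Hy]]]; split => //.
  by have -> : (fun j => count (pred1 j) t) = y by apply: funext => j; rewrite Hy.
case=> Hs HW; exists (fun j => count (pred1 j) t); split => //; split; last by split.
by exists i; split => //; rewrite -{2}(size_tuple t); exact: sum_eq_count.
Qed.

Theorem mainTheorem3 (Sigma A : finType) (S : ANS Sigma) (x : nat -> A) :
  addable S -> automatic S x ->
  weakly_codable S (winning_shift (orbit_closure x)).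
Proof.
move=> Haddable Haut k i Hik.
have Hadd := add_recog_of_addable Haddable.
have HL := lang_recog_of_add Hadd.
have Hlet := letter_recog_of_automatic Haut HL.
have Hrecog : recog S (fun v : 'I_i -> nat => win_top x i (env_of v)).
  exact: definable_recog (definable_win_top i HL Hadd Hlet) (@win_top_depends A x i).
apply: ((recognizable_recog S _).2 Hrecog) => t.
rewrite codable_slice_iff // win_top_correct -sorted_env_of winning_shift_wins.
suff -> : (fun j => count (pred1 j) t) = cnt i (env_of (tnth t)) by [].
by apply: funext => j; exact: count_env_of.
Qed.
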